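(* Let $A=P+\Xi$ be real $m\times n$ matrices and let $J$ be a rectangular index set. Denote by $(\hat u,\hat v)$ and $(u,v)$ the pairs of (unit) singular vectors of $\Pi_J(A)$ and $\Pi_J(P)$, respectively, corresponding to their largest singular values. Then $$\|\Pi_{u,v}(\Pi_J(P))-P\|_F\le\|\Pi_{\hat u,\hat v}(\Pi_J(P))-P\|_F\le\|\Pi_{\hat u,\hat v}(\Pi_J(A))-P\|_F .$$
   Context: For unit vectors $u,v$ and a matrix $X$, $\Pi_{u,v}(X)=(uu^T)X(vv^T)$. A rectangular index set is $J=J_1\times J_2$ with $J_1$ a set of row indices and $J_2$ a set of column indices; $\Pi_J(X)$ is the matrix that agrees with $X$ on $J$ and is zero outside $J$. *)

From HB Require Import structures.
From mathcomp Require Import all_boot all_order all_algebra.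
From mathcomp Require Import reals.
Set Implicit Arguments. Unset Strict Implicit. Unset Printing Implicit Defensive.
Import Order.TTheory GRing.Theory Num.Theory.
Local Open Scope ring_scope.

Section Defs.
Variable R : realType.

Definition frob (m n : nat) (X : 'M[R]_(m, n)) : R :=
  Num.sqrt (\sum_(i < m) \sum_(j < n) X i j ^+ 2).

Definition unit_vec (k : nat) (u : 'cV[R]_k) : Prop :=
  \sum_(i < k) u i 0 ^+ 2 = 1.

Definition Pi_uv (m n : nat) (u : 'cV[R]_m) (v : 'cV[R]_n) (X : 'M[R]_(m, n))
  : 'M[R]_(m, n) := (u *m u^T) *m X *m (v *m v^T).

Definition Pi_J (m n : nat) (J1 : {set 'I_m}) (J2 : {set 'I_n})
  (X : 'M[R]_(m, n)) : 'M[R]_(m, n) :=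
  \matrix_(i, j) (if (i \in J1) && (j \in J2) then X i j else 0).

Definition sing_triple (m n : nat) (X : 'M[R]_(m, n)) (s : R)
  (u : 'cV[R]_m) (v : 'cV[R]_n) : Prop :=
  [/\ 0 < s, unit_vec u, unit_vec v, X *m v = s *: u & X^T *m u = s *: v].

Definition top_sing_pair (m n : nat) (X : 'M[R]_(m, n))
  (u : 'cV[R]_m) (v : 'cV[R]_n) : Prop :=
  exists s, sing_triple X s u v /\
    forall s' a b, sing_triple X s' a b -> s' <= s.
End Defs.

From HB Require Import structures.
From mathcomp Require Import all_boot all_order all_algebra.
From mathcomp Require Import reals.
From mathcomp Require Import all_classical topology normedtype derive.
From mathcomp Require Import ring lra.
Import Order.TTheory GRing.Theory Num.Theory.
Import numFieldNormedType.Exports.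
Set Implicit Arguments. Unset Strict Implicit. Unset Printing Implicit Defensive.
Local Open Scope ring_scope.

(* The singular vectors of Pi_J(X) vanish off J, so for the unit vectors x, y
   in question x^T Pi_J(X) y = x^T X y, and for any M the rank-one matrix
   Pi_{x,y}(M) = d x y^T with d = x^T M y satisfies
     ||Pi_{x,y}(M) - P||_F^2 = ||P||_F^2 + d^2 - 2 d x^T P y.
   For (u, v) and M = Pi_J(P) this is ||P||^2 - s^2 (s the top singular value);
   for (uh, vh) it is ||P||^2 - d^2 with M = Pi_J(P), and exceeds that by
   (d_A - d)^2 with M = Pi_J(A).  It remains to see |x^T Q y| <= s for unit
   x, y: the maximum l of ||Q y||^2 on the compact unit sphere is attained at
   an eigenvector y0 of Q^T Q, so (sqrt l, Q y0 / sqrt l, y0) is a singular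
   triple and l <= s^2; Cauchy-Schwarz concludes. *)

Section DotProduct.
Variable R : realFieldType.
Implicit Types (k n : nat).

Definition dot k (x y : 'cV[R]_k) : R := \sum_i x i 0 * y i 0.

Lemma dotC k (x y : 'cV[R]_k) : dot x y = dot y x.
Proof. by apply: eq_bigr => i _; rewrite mulrC. Qed.

Lemma dotDl k (x y z : 'cV[R]_k) : dot (x + y) z = dot x z + dot y z.
Proof. by rewrite /dot -big_split; apply: eq_bigr => i _; rewrite !mxE mulrDl. Qed.

Lemma dotBl k (x y z : 'cV[R]_k) : dot (x - y) z = dot x z - dot y z.
Proof. by rewrite /dot -sumrB; apply: eq_bigr => i _; rewrite !mxE mulrBl. Qed.

Lemma dotZl k (c : R) (x z : 'cV[R]_k) : dot (c *: x) z = c * dot x z.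
Proof. by rewrite /dot mulr_sumr; apply: eq_bigr => i _; rewrite !mxE mulrA. Qed.

Lemma dotDr k (x y z : 'cV[R]_k) : dot z (x + y) = dot z x + dot z y.
Proof. by rewrite dotC dotDl !(dotC z). Qed.

Lemma dotBr k (x y z : 'cV[R]_k) : dot z (x - y) = dot z x - dot z y.
Proof. by rewrite dotC dotBl !(dotC z). Qed.

Lemma dotZr k (c : R) (x z : 'cV[R]_k) : dot z (c *: x) = c * dot z x.
Proof. by rewrite dotC dotZl dotC. Qed.

Lemma dot0r k (x : 'cV[R]_k) : dot x 0 = 0.
Proof. by rewrite -(scale0r 0) dotZr mul0r. Qed.

Lemma dot_mulmx k n (M : 'M[R]_(k, n)) (x : 'cV[R]_k) (y : 'cV[R]_n) :
  dot x (M *m y) = dot (M^T *m x) y.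
Proof.
rewrite /dot; under eq_bigr do rewrite mxE mulr_sumr.
rewrite exchange_big /=; apply: eq_bigr => j _; rewrite mxE mulr_suml.
by apply: eq_bigr => i _; rewrite !mxE mulrCA mulrA.
Qed.

Lemma dotxx_ge0 k (x : 'cV[R]_k) : 0 <= dot x x.
Proof. by apply: sumr_ge0 => i _; exact: sqr_ge0. Qed.

Lemma dotxx_eq0 k (x : 'cV[R]_k) : (dot x x == 0) = (x == 0).
Proof.
apply/idP/eqP => [/eqP/psumr_eq0P x0|->]; last by rewrite dot0r.
apply/matrixP => i j; rewrite (ord1 j) mxE.
by apply/eqP; rewrite -sqrf_eq0 [_ ^+ 2]x0 // => l _; exact: sqr_ge0.
Qed.

Lemma dot_cauchy_schwarz k (x y : 'cV[R]_k) : dot x y ^+ 2 <= dot x x * dot y y.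
Proof.
have [->|y0] := eqVneq y 0; first by rewrite !dot0r expr0n mulr0.
have yy0 : 0 < dot y y by rewrite lt0r dotxx_eq0 y0 dotxx_ge0.
pose t := dot x y / dot y y.
have ty : t * dot y y = dot x y by rewrite /t mulfVK ?gt_eqF.
have := dotxx_ge0 (x - t *: y).
rewrite !dotBl !dotBr !dotZl !dotZr (dotC y x); nra.
Qed.

Lemma eq0_of_quad_le0 (a b : R) : (forall t, a * t + b * t ^+ 2 <= 0) -> a = 0.
Proof.
move=> le0; pose d := `|b| + 1; pose t := a / d.
have td : t * d = a by rewrite /t mulfVK // gt_eqF // ltr_pwDr.
have db : 1 <= d + b by have := ler_norm (- b); rewrite normrN /d; lra.
have tdb : t ^+ 2 * (d + b) <= 0 by have := le0 t; rewrite -{1}td; nra.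
have t0 : t = 0 by nra.
by rewrite -td t0 mul0r.
Qed.

Lemma mulmx_dot_max_eigen k n (Q : 'M[R]_(k, n)) (y0 : 'cV[R]_n) :
  let l := dot (Q *m y0) (Q *m y0) in
  dot y0 y0 = 1 -> (forall w, dot (Q *m w) (Q *m w) <= l * dot w w) ->
  Q^T *m Q *m y0 = l *: y0.
Proof.
move=> l y01 lmax; apply/eqP; rewrite -subr_eq0 -dotxx_eq0.
set z := _ - _; have Qy0 : Q^T *m Q *m y0 = z + l *: y0 by rewrite subrK.
clearbody z.
suff /eqP : 2 * dot z z = 0 by rewrite mulf_eq0 pnatr_eq0.
(* Maximality at y0 + t z gives 2 t (z.z) + O(t^2) <= 0 for all t. *)
apply: (@eq0_of_quad_le0 _ (dot (Q *m z) (Q *m z) - l * dot z z)) => t.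
have := lmax (y0 + t *: z).
rewrite mulmxDr -scalemxAr !(dotDl, dotDr, dotZl, dotZr) (dotC (Q *m z)).
rewrite [dot (Q *m y0) (Q *m z)]dot_mulmx mulmxA Qy0 dotDl dotZl (dotC z y0) y01.
rewrite -/l; nra.
Qed.

End DotProduct.

Lemma mulmx_dot_le_unit (R : rcfType) k n (Q : 'M[R]_(k, n)) (l : R) :
  (forall y, dot y y = 1 -> dot (Q *m y) (Q *m y) <= l) ->
  forall w, dot (Q *m w) (Q *m w) <= l * dot w w.
Proof.
move=> Qle w; have [->|w0] := eqVneq w 0; first by rewrite mulmx0 !dot0r mulr0.
have ww_gt0 : 0 < dot w w by rewrite lt0r dotxx_eq0 w0 dotxx_ge0.
pose q := Num.sqrt (dot w w).
have q_gt0 : 0 < q by rewrite sqrtr_gt0.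
have qq : q * q = dot w w by rewrite -expr2 sqr_sqrtr // ltW.
have q0 : q != 0 by rewrite gt_eqF.
have := Qle (q^-1 *: w); rewrite -scalemxAr !(dotZl, dotZr) -qq mulKf // mulVf //.
move=> /(_ erefl) Qle_w.
have -> : dot (Q *m w) (Q *m w) = q * q * (q^-1 * (q^-1 * dot (Q *m w) (Q *m w))).
  by field.
by rewrite mulrC ler_wpM2r // mulr_ge0 // ltW.
Qed.

Section UnitSphere.
Variable R : realType.
Implicit Types (k n : nat).

Lemma unit_vecE k (x : 'cV[R]_k) : unit_vec x = (dot x x = 1).
Proof. by []. Qed.

Lemma unit_vec_dim_gt0 k (x : 'cV[R]_k) : unit_vec x -> (0 < k)%N.
Proof. by case: k x => // x; rewrite /unit_vec big_ord0 => /esym/eqP; rewrite oner_eq0. Qed.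

Lemma continuous_dot (T : topologicalType) k (g h : T -> 'cV[R]_k) :
  (forall i, continuous (fun t => g t i 0)) ->
  (forall i, continuous (fun t => h t i 0)) ->
  continuous (fun t => dot (g t) (h t)).
Proof.
move=> gc hc; apply: continuous_big => [|i _ t]; first exact: add_continuous.
by apply: continuousM; [exact: gc | exact: hc].
Qed.

Lemma continuous_mulmx_coord (T : topologicalType) k n (Q : 'M[R]_(k, n))
    (g : T -> 'cV[R]_n) :
  (forall j, continuous (fun t => g t j 0)) ->
  forall i, continuous (fun t => (Q *m g t) i 0).
Proof.
move=> gc i; under eq_fun do rewrite mxE.
apply: continuous_big => [|j _ t]; first exact: add_continuous.
by apply: continuousM; [exact: cvg_cst | exact: gc].
Qed.

Local Open Scope classical_set_scope.

Lemma continuous_trmx_coord n i : continuous (fun r : 'rV[R]_n => r^T i 0).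
Proof. by under eq_fun do rewrite mxE; exact: coord_continuous. Qed.

Lemma unit_sphere_compact n : compact [set r : 'rV[R]_n | unit_vec r^T].
Proof.
apply: bounded_closed_compact.
  exists 1; split => // M M1 r /= r1.
  rewrite [leLHS]/Num.norm /= mx_normrE; apply: bigmax_le => [|[i j] _ /=]; first lra.
  have rij : r i j ^+ 2 <= 1.
    rewrite (ord1 i) -r1 /unit_vec (bigD1 j) //= mxE lerDl.
    by apply: sumr_ge0 => l _; exact: sqr_ge0.
  suff : `|r i j| <= 1 by lra.
  by rewrite ler_norml; apply/andP; split; nra.
have -> : [set r : 'rV[R]_n | unit_vec r^T] = (fun r => dot r^T r^T) @^-1` [set 1].
  by [].
apply: preimage_closed => [r _|]; last exact: closed_eq.
by apply: continuous_dot => i; exact: continuous_trmx_coord.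
Qed.

Lemma exists_mulmx_dot_max k n (Q : 'M[R]_(k, n)) : (0 < n)%N ->
  exists2 y0, unit_vec y0 &
    forall y, unit_vec y -> dot (Q *m y) (Q *m y) <= dot (Q *m y0) (Q *m y0).
Proof.
move=> n_gt0; pose e := delta_mx 0 (Ordinal n_gt0) : 'rV[R]_n.
have e1 : unit_vec e^T.
  rewrite /unit_vec (bigD1 (Ordinal n_gt0)) //= big1 => [|i /negPf ne].
    by rewrite !mxE !eqxx expr1n addr0.
  by rewrite !mxE ne andbF expr0n.
have QrT_cont i : continuous (fun r : 'rV[R]_n => (Q *m r^T) i 0).
  exact/continuous_mulmx_coord/continuous_trmx_coord.
have [r0 /[!inE] r01 r0max] := compact_EVT_max (ex_intro _ e e1)
  (@unit_sphere_compact n) (continuous_subspaceT (continuous_dot QrT_cont QrT_cont)).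
exists r0^T => // y y1; rewrite -[y]trmxK; apply: r0max; rewrite inE /=.
by rewrite trmxK.
Qed.

End UnitSphere.

Section SingularValues.
Variable R : realType.
Implicit Types (k n : nat).

Lemma sing_triple_of_eigen k n (Q : 'M[R]_(k, n)) (y0 : 'cV[R]_n) :
  let l := dot (Q *m y0) (Q *m y0) in
  unit_vec y0 -> Q^T *m Q *m y0 = l *: y0 -> 0 < l ->
  sing_triple Q (Num.sqrt l) ((Num.sqrt l)^-1 *: (Q *m y0)) y0.
Proof.
move=> l y01 Qy0 l_gt0; set q := Num.sqrt l.
have q0 : q != 0 by rewrite gt_eqF // sqrtr_gt0.
have qq : q * q = l by rewrite -expr2 sqr_sqrtr // ltW.
split => //; first by rewrite sqrtr_gt0.
- by rewrite unit_vecE dotZl dotZr -/l -qq mulKf // mulVf.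
- by rewrite scalerA mulfV // scale1r.
- by rewrite -scalemxAr mulmxA Qy0 scalerA -qq mulKf.
Qed.

Lemma top_sing_value_bound k n (Q : 'M[R]_(k, n)) s u v (x : 'cV[R]_k) (y : 'cV[R]_n) :
  sing_triple Q s u v -> (forall s' a b, sing_triple Q s' a b -> s' <= s) ->
  unit_vec x -> unit_vec y -> dot x (Q *m y) ^+ 2 <= s ^+ 2.
Proof.
move=> [s_gt0 _ /unit_vec_dim_gt0 n_gt0 _ _] s_max; rewrite !unit_vecE => x1 y1.
have [y0 y01 y0_max] := exists_mulmx_dot_max Q n_gt0.
set l := dot (Q *m y0) (Q *m y0) in y0_max.
have Q_le : forall w, dot (Q *m w) (Q *m w) <= l * dot w w.
  exact: mulmx_dot_le_unit.
have l_le : l <= s ^+ 2.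
  have [l_le0|l_gt0] := leP l 0; first by rewrite (le_trans l_le0) ?sqr_ge0.
  have := s_max _ _ _ (sing_triple_of_eigen y01 (mulmx_dot_max_eigen y01 Q_le) l_gt0).
  by move=> sqrt_l_le; rewrite -ler_sqrt ?sqr_ge0 // sqrtr_sqr ger0_norm // ltW.
apply: le_trans (dot_cauchy_schwarz x (Q *m y)) _.
by rewrite x1 mul1r (le_trans (Q_le y)) // y1 mulr1.
Qed.

End SingularValues.

Section Frobenius.
Variable R : realType.
Implicit Types (m n : nat).

Definition frob2 m n (X : 'M[R]_(m, n)) : R := \sum_i \sum_j X i j ^+ 2.

Lemma frobE m n (X : 'M[R]_(m, n)) : frob X = Num.sqrt (frob2 X).
Proof. by []. Qed.

Lemma Pi_uvE m n (u : 'cV[R]_m) (v : 'cV[R]_n) (M : 'M[R]_(m, n)) :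
  Pi_uv u v M = dot u (M *m v) *: (u *m v^T).
Proof.
rewrite /Pi_uv !mulmxA -[u *m u^T *m M]mulmxA -[u *m (u^T *m M) *m v]mulmxA.
rewrite [u^T *m M *m v]mx11_scalar mul_mx_scalar -scalemxAl -mulmxA.
by congr (_ *: _); rewrite mxE; apply: eq_bigr => i _; rewrite !mxE.
Qed.

Lemma frob2_rank1_subr m n (x : 'cV[R]_m) (y : 'cV[R]_n) c (P : 'M[R]_(m, n)) :
  unit_vec x -> unit_vec y ->
  frob2 (c *: (x *m y^T) - P) = frob2 P + c ^+ 2 - 2 * c * dot x (P *m y).
Proof.
rewrite !unit_vecE => x1 y1.
have entry i j : (c *: (x *m y^T) - P) i j ^+ 2 =
    P i j ^+ 2 + c ^+ 2 * (x i 0 * x i 0 * (y j 0 * y j 0))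
    - 2 * c * (x i 0 * (P i j * y j 0)).
  by rewrite !mxE big_ord1 !mxE; ring.
rewrite /frob2; under eq_bigr do under eq_bigr do rewrite entry.
under eq_bigr do rewrite sumrB big_split /=.
rewrite sumrB big_split /=; congr (_ + _ - _).
  transitivity (c ^+ 2 * (dot x x * dot y y)); last by rewrite x1 y1 !mulr1.
  rewrite /dot big_distrl mulr_sumr; apply: eq_bigr => i _.
  by rewrite /= !mulr_sumr.
rewrite /dot mulr_sumr; apply: eq_bigr => i _.
by rewrite mxE !mulr_sumr.
Qed.

Section RectangularProjection.
Variables (m n : nat) (J1 : {set 'I_m}) (J2 : {set 'I_n}).

Lemma sing_triple_Pi_J_supp (X : 'M[R]_(m, n)) s (a : 'cV[R]_m) (b : 'cV[R]_n) :
  sing_triple (Pi_J J1 J2 X) s a b ->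
  (forall i, i \notin J1 -> a i 0 = 0) /\ (forall j, j \notin J2 -> b j 0 = 0).
Proof.
move=> [s_gt0 _ _ Xb XTa]; split=> [i iJ | j jJ].
  have /eqP := congr1 (fun c : 'cV[R]_m => c i 0) Xb.
  rewrite !mxE big1 => [|j _]; last by rewrite !mxE (negPf iJ) mul0r.
  by rewrite eq_sym mulf_eq0 gt_eqF // => /eqP.
have /eqP := congr1 (fun c : 'cV[R]_n => c j 0) XTa.
rewrite !mxE big1 => [|i _]; last by rewrite !mxE (negPf jJ) andbF mul0r.
by rewrite eq_sym mulf_eq0 gt_eqF // => /eqP.
Qed.

Lemma dot_Pi_J (M : 'M[R]_(m, n)) (x : 'cV[R]_m) (y : 'cV[R]_n) :
  (forall i, i \notin J1 -> x i 0 = 0) -> (forall j, j \notin J2 -> y j 0 = 0) ->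
  dot x (Pi_J J1 J2 M *m y) = dot x (M *m y).
Proof.
move=> xJ yJ; apply: eq_bigr => i _; rewrite !mxE.
have [iJ|iJ] := boolP (i \in J1); last by rewrite xJ ?mul0r.
congr (_ * _); apply: eq_bigr => j _; rewrite !mxE iJ.
by have [//|jJ] := boolP (j \in J2); rewrite yJ ?mulr0.
Qed.

End RectangularProjection.
End Frobenius.

Theorem lemma6 (R : realType) (m n : nat) (P Xi : 'M[R]_(m, n))
  (J1 : {set 'I_m}) (J2 : {set 'I_n})
  (u uh : 'cV[R]_m) (v vh : 'cV[R]_n) :
  top_sing_pair (Pi_J J1 J2 (P + Xi)) uh vh ->
  top_sing_pair (Pi_J J1 J2 P) u v ->
  frob (Pi_uv u v (Pi_J J1 J2 P) - P) <= frob (Pi_uv uh vh (Pi_J J1 J2 P) - P) /\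
  frob (Pi_uv uh vh (Pi_J J1 J2 P) - P) <= frob (Pi_uv uh vh (Pi_J J1 J2 (P + Xi)) - P).
Proof.
move=> [sh [Th _]] [s [T s_max]].
have [uhJ vhJ] := sing_triple_Pi_J_supp Th; have [uJ vJ] := sing_triple_Pi_J_supp T.
have [_ uh1 vh1 _ _] := Th; have [_ u1 v1 Pv _] := T.
have d_le_s := top_sing_value_bound T s_max uh1 vh1.
have us : dot u (Pi_J J1 J2 P *m v) = s by rewrite Pv dotZr (u1 : dot u u = 1) mulr1.
rewrite !frobE !Pi_uvE !frob2_rank1_subr // -(dot_Pi_J P uJ vJ) -(dot_Pi_J P uhJ vhJ) us.
move: d_le_s; set d := dot uh _; set dA := dot uh _ => d_le_s.
have dA_d := sqr_ge0 (dA - d).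
by split; apply: ler_wsqrtr; nra.
Qed.
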